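(* Let $n\ge 3$. The set $\mathbf{W}^{\le 5}_{\mathrm{bf}}(n)$ is the unique maximal transition semigroup of a minimal DFA $\mathcal{D}_n$ of a bifix-free language (with the state conventions below) in which all pairs of states from $Q_M$ are colliding.
   Context: A language is bifix-free if no word of it is a proper prefix or a proper suffix of another word of it. For a minimal complete DFA $\mathcal{D}_n$ of a bifix-free language with $n$ states the states are named $Q=\{0,\dots,n-1\}$ so that $0$ is initial, $n-1$ is the empty state and $n-2$ is the unique final state (quotient $\{\varepsilon\}$). Transformations act on the right, $q(st)=(qs)t$; the transition semigroup $T(n)$ is the semigroup of transformations of $Q$ induced by nonempty words. Let $Q_M=\{1,\dots,n-3\}$. An unordered pair $\{p,q\}$ of distinct states of $Q_M$ is colliding (in $T(n)$) if there is $t\in T(n)$ with $0t=p$ and $rt=q$ for some $r\in Q_M$. Let $\mathbf{B}_{\mathrm{bf}}(n)$ be the set of all transformations $t$ of $Q$ with $0\notin Qt$, $(n-1)t=n-1$, $(n-2)t=n-1$, and for all $j\ge1$, either $0t^j=n-1$ or $0t^j\ne qt^j$ for all $0<q<n-1$. Then $\mathbf{W}^{\le 5}_{\mathrm{bf}}(n)=\{t\in\mathbf{B}_{\mathrm{bf}}(n)\mid$ for all distinct $p,q\in Q_M$, $pt=qt=n-1$ or $pt\ne qt\}$. *)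

From mathcomp Require Import all_boot.
Set Implicit Arguments.
Unset Strict Implicit.
Unset Printing Implicit Defensive.

(* States Q = {0,...,n-1} are 'I_n; special states are referred to by their
   nat value: 0 initial, n-1 empty state, n-2 unique final state. *)

Definition trans (n : nat) := {ffun 'I_n -> 'I_n}.

(* Action of a word (transformations act on the right: q(st) = (qs)t). *)
Definition run (n : nat) (Sigma : Type) (delta : Sigma -> trans n)
  (w : seq Sigma) (q : 'I_n) : 'I_n :=
  foldl (fun p a => delta a p) q w.

Definition lang (n : nat) (Sigma : Type) (delta : Sigma -> trans n)
  (w : seq Sigma) : Prop :=
  exists q0 : 'I_n, val q0 = 0 /\ val (run delta w q0) = n - 2.

Definition bifix_free (A : Type) (L : seq A -> Prop) : Prop :=
  forall u v : seq A, L u -> L v -> forall x : seq A, x <> [::] ->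
    v <> u ++ x /\ v <> x ++ u.

(* D_n is a minimal complete DFA of a bifix-free language, with initial state
   0, empty state n-1 and unique final state n-2 whose quotient is {eps}. *)
Definition bf_min_dfa (n : nat) (Sigma : Type) (delta : Sigma -> trans n)
  : Prop :=
  (forall p q0 : 'I_n, val q0 = 0 -> exists w, run delta w q0 = p) /\
  (forall p q : 'I_n, p <> q -> exists w : seq Sigma,
      (val (run delta w p) == n - 2) != (val (run delta w q) == n - 2)) /\
  (forall q : 'I_n, val q = n - 1 -> forall w, val (run delta w q) <> n - 2) /\
  (forall q : 'I_n, val q = n - 2 -> forall w, w <> [::] ->
      val (run delta w q) <> n - 2) /\
  bifix_free (lang delta).

Definition in_T (n : nat) (Sigma : Type) (delta : Sigma -> trans n)
  (t : trans n) : Prop :=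
  exists w : seq Sigma, w <> [::] /\ forall q, t q = run delta w q.

Definition inQM (n : nat) (q : 'I_n) : Prop := 0 < val q < n - 2.

Definition collide (n : nat) (T : trans n -> Prop) (p q : 'I_n) : Prop :=
  exists t : trans n, T t /\
    exists r q0 : 'I_n, inQM r /\ val q0 = 0 /\ t q0 = p /\ t r = q.

Definition all_colliding (n : nat) (T : trans n -> Prop) : Prop :=
  forall p q : 'I_n, inQM p -> inQM q -> p <> q ->
    collide T p q \/ collide T q p.

Definition inB (n : nat) (t : trans n) : Prop :=
  (forall q, val (t q) <> 0) /\
  (forall q : 'I_n, val q = n - 1 -> val (t q) = n - 1) /\
  (forall q : 'I_n, val q = n - 2 -> val (t q) = n - 1) /\
  (forall j, 1 <= j -> forall q0 : 'I_n, val q0 = 0 ->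
     val (iter j (fun x => t x) q0) = n - 1 \/
     (forall q : 'I_n, 0 < val q < n - 1 ->
        iter j (fun x => t x) q0 <> iter j (fun x => t x) q)).

Definition inW (n : nat) (t : trans n) : Prop :=
  inB t /\
  forall p q : 'I_n, inQM p -> inQM q -> p <> q ->
    (val (t p) = n - 1 /\ val (t q) = n - 1) \/ t p <> t q.

From mathcomp Require Import all_boot zify.
From Stdlib Require Import ClassicalEpsilon.
Set Implicit Arguments.
Unset Strict Implicit.
Unset Printing Implicit Defensive.

(* The condition defining W quantifies over all powers t^j, but it is
   equivalent to its instance j = 1: t avoids 0, sends n-2 and n-1 to n-1,
   and merges two distinct states of {0,...,n-3} only into n-1 ([inW1]).
   This one-step condition is closed under composition, so the automaton
   whose letters act as all elements of W has transition semigroup W; it is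
   minimal and bifix-free, and maps defined at two points witness all
   collisions.
   Conversely, in a minimal bifix-free DFA, a word w sending 0 and a state
   q <> 0 to the same non-empty state yields words w v and u w v of the
   language, u reaching q. If 0 t' = p and r t' = q with r in Q_M, a word
   merging p and q merges 0 and r after t'; so with all pairs colliding no
   word merges two states of {0,...,n-3} outside n-1. *)

Lemma run_cat n (Sigma : Type) (delta : Sigma -> trans n) u v q :
  run delta (u ++ v) q = run delta v (run delta u q).
Proof. by rewrite /run foldl_cat. Qed.

Lemma val_neq0 n (x y : 'I_n) : val x = 0 -> x <> y -> val y <> 0.
Proof. by move=> x0 xy y0; apply: xy; apply: val_inj; rewrite x0 y0. Qed.

Lemma inQM_of_neq0 n (x : 'I_n) : val x != 0 -> val x < n - 2 -> inQM x.
Proof. by move=> x0 x_lt; rewrite /inQM x_lt andbT lt0n. Qed.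

Lemma ord_ge_subn2 n (q : 'I_n) :
  n - 2 <= val q -> val q = n - 2 \/ val q = n - 1.
Proof. have : val q < n := ltn_ord q; lia. Qed.

Section OneStepW.

Variable n : nat.

Definition inW1 (f : 'I_n -> 'I_n) : Prop :=
  [/\ forall q, val (f q) <> 0,
      forall q : 'I_n, n - 2 <= val q -> val (f q) = n - 1 &
      forall p q : 'I_n, val p < n - 2 -> val q < n - 2 -> p <> q ->
        f p = f q -> val (f p) = n - 1].

Lemma inW1_ext (f g : 'I_n -> 'I_n) : f =1 g -> inW1 f -> inW1 g.
Proof.
move=> fg [f0 f_end f_inj].
by split=> [q|q|p q]; rewrite -!fg; [exact: f0 | exact: f_end | exact: f_inj].
Qed.

Lemma inW1_lt (f : 'I_n -> 'I_n) q :
  inW1 f -> val (f q) <> n - 1 -> val q < n - 2.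
Proof. by case=> _ f_end _ fq; rewrite ltnNge; apply/negP => /f_end. Qed.

Lemma inW1_comp (f g : 'I_n -> 'I_n) : inW1 f -> inW1 g -> inW1 (g \o f).
Proof.
move=> Wf Wg; have [f0 f_end f_inj] := Wf; have [g0 g_end g_inj] := Wg.
split=> [q|q /f_end fq|p q p_lt q_lt pq /= gfpq]; first exact: g0.
  by apply: g_end; rewrite /= fq; lia.
have [//|gfp] := eqVneq (val (g (f p))) (n - 1).
have fp_lt : val (f p) < n - 2 by apply: inW1_lt Wg _; apply/eqP.
have fq_lt : val (f q) < n - 2 by apply: inW1_lt Wg _; rewrite -gfpq; apply/eqP.
have [fpq|fpq] := eqVneq (f p) (f q).
  by move: fp_lt; rewrite (f_inj p q) //; lia.
by case/eqP: gfp; apply: (g_inj _ (f q)) => //; exact/eqP.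
Qed.

Lemma inW1_iter (f : 'I_n -> 'I_n) j : inW1 f -> 0 < j -> inW1 (iter j f).
Proof.
move=> Wf; elim: j => [//|[_ _|j IH _]]; first exact: inW1_ext Wf.
exact: inW1_comp (IH isT) Wf.
Qed.

Lemma inW1_merge (f : 'I_n -> 'I_n) p q :
  inW1 f -> val p < n - 2 -> val q < n - 1 -> p <> q ->
  f p = f q -> val (f p) = n - 1.
Proof.
case=> _ f_end f_inj p_lt q_lt pq fpq.
have [q_lt'|q_ge] := ltnP (val q) (n - 2); first exact: (f_inj p q).
by rewrite fpq f_end.
Qed.

Lemma inWE (t : trans n) : inW t <-> inW1 t.
Proof.
split.
  case=> -[t0 [t_empty [t_final t_iter]]] t_QM.
  have merge0 (x y : 'I_n) : val x = 0 -> x <> y -> val y < n - 2 ->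
      t x = t y -> val (t x) = n - 1.
    move=> x0 xy y_lt txy; case: (t_iter 1 isT x x0) => [//|/(_ y) x_sep].
    have y0 := val_neq0 x0 xy.
    by case: (x_sep _ txy); lia.
  split=> // [q q_ge|p q p_lt q_lt pq tpq].
    by case/ord_ge_subn2: q_ge => [/t_final|/t_empty].
  have [p0|p0] := eqVneq (val p) 0; first exact: (merge0 p q).
  have [q0|q0] := eqVneq (val q) 0.
    by rewrite tpq; apply: (merge0 q p) => //; exact: nesym.
  by case: (t_QM p q (inQM_of_neq0 p0 p_lt) (inQM_of_neq0 q0 q_lt) pq) => [[]|].
move=> Wt; have [t0 t_end _] := Wt; split.
  split=> //; split=> [q q1|]; first by apply: t_end; lia.
  split=> [q q2|j j_gt0 q0 q0_0]; first by apply: t_end; lia.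
  have [|ne] := eqVneq (val (iter j t q0)) (n - 1); first by left.
  right=> q q_bd tj; case/eqP: ne.
  apply: (inW1_merge (inW1_iter Wt j_gt0)) tj; try lia.
  by move=> q0q; move: q_bd; rewrite -q0q q0_0.
move=> p q /andP [p_gt0 p_lt] /andP [q_gt0 q_lt] pq.
have [tpq|] := eqVneq (t p) (t q); last by move/eqP; right.
by left; rewrite -tpq; case: Wt => _ _ /(_ p q p_lt q_lt pq tpq).
Qed.

End OneStepW.

Section BifixFreeMinimalDFA.

Variables (n : nat) (Sigma : Type) (delta : Sigma -> trans n).
Hypothesis D : bf_min_dfa delta.

Lemma bf_productive q :
  val q <> n - 1 -> exists w, val (run delta w q) = n - 2.
Proof.
case: D => _ [dist [dead _]] qe.
have e_lt : n - 1 < n by have := ltn_ord q; lia.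
have [w] := dist q (Ordinal e_lt) (fun E => qe (congr1 val E)).
have -> : (val (run delta w (Ordinal e_lt)) == n - 2) = false.
  by apply/eqP; apply: dead.
by rewrite eqbF_neg negbK => /eqP; exists w.
Qed.

Lemma bf_run_empty w q : val q = n - 1 -> val (run delta w q) = n - 1.
Proof.
case: D => _ [_ [dead _]] qe.
have [//|ne] := eqVneq (val (run delta w q)) (n - 1).
have [v] := bf_productive (elimN eqP ne).
by rewrite -run_cat => /(dead _ qe) [].
Qed.

Lemma bf_run_final w q :
  w <> [::] -> val q = n - 2 -> val (run delta w q) = n - 1.
Proof.
case: D => _ [_ [_ [final _]]] wne qf.
have [//|ne] := eqVneq (val (run delta w q)) (n - 1).
have [v] := bf_productive (elimN eqP ne).
have wvne : w ++ v <> [::] by case: (w) wne.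
by rewrite -run_cat => /(final _ qf _ wvne) [].
Qed.

Lemma bf_run_neq0 w q : w <> [::] -> val (run delta w q) <> 0.
Proof.
case: D => [reach [_ [_ [_ bifix]]]] wne z0.
have f_lt : n - 2 < n by have := ltn_ord q; lia.
have [u uq] := reach q _ z0.
have [v vf] := reach (Ordinal f_lt) _ z0.
have Lv : lang delta v by exists (run delta w q); rewrite vf.
have Luwv : lang delta ((u ++ w) ++ v).
  by exists (run delta w q); rewrite !run_cat uq vf.
have uwne : u ++ w <> [::] by case: (u) => [|//]; case: (w) wne.
by case: (bifix _ _ Lv Luwv _ uwne).
Qed.

Lemma bf_run_merge_initial w q0 q :
  val q0 = 0 -> val q <> 0 -> run delta w q0 = run delta w q ->
  val (run delta w q0) = n - 1.
Proof.
case: D => [reach [_ [_ [_ bifix]]]] q00 q_ne0 wq.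
have [//|ne] := eqVneq (val (run delta w q0)) (n - 1).
have [v vf] := bf_productive (elimN eqP ne).
have [u uq] := reach q _ q00.
have une : u <> [::] by move=> u0; apply: q_ne0; rewrite -uq u0.
have Lwv : lang delta (w ++ v) by exists q0; rewrite run_cat.
have Luwv : lang delta (u ++ (w ++ v)).
  by exists q0; rewrite !run_cat uq -wq.
by case: (bifix _ _ Lwv Luwv _ une).
Qed.

Hypothesis C : all_colliding (in_T delta).

Lemma bf_inW1_run w : w <> [::] -> inW1 (run delta w).
Proof.
move=> wne; split=> [q|q q_ge|p q p_lt q_lt pq wpq]; first exact: bf_run_neq0.
  by case/ord_ge_subn2: q_ge => [/(bf_run_final wne)|/bf_run_empty].
have collide_merge (x y : 'I_n) : collide (in_T delta) x y ->
    run delta w x = run delta w y -> val (run delta w x) = n - 1.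
  case=> t' [[w' [_ t_w']] [r [q0 [/andP [r_gt0 _] [q00 [t_q0 t_r]]]]]] wxy.
  have r0 : val r <> 0 by lia.
  have := bf_run_merge_initial (w := w' ++ w) q00 r0.
  by rewrite !run_cat -!t_w' t_q0 t_r; apply.
have [p0|p0] := eqVneq (val p) 0.
  exact: bf_run_merge_initial p0 (val_neq0 p0 pq) wpq.
have [q0|q0] := eqVneq (val q) 0.
  rewrite wpq.
  exact: bf_run_merge_initial q0 (val_neq0 q0 (nesym pq)) (esym wpq).
case: (C (inQM_of_neq0 p0 p_lt) (inQM_of_neq0 q0 q_lt) pq) => /collide_merge.
  exact.
by rewrite wpq; apply.
Qed.

End BifixFreeMinimalDFA.

Section W1Automaton.

Variables (n : nat) (Sigma : Type) (delta : Sigma -> trans n).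
Hypothesis n_ge3 : 3 <= n.
Hypothesis delta_W1 : forall a, inW1 (delta a).

Lemma inW1_run w : w <> [::] -> inW1 (run delta w).
Proof.
case: w => [//|a w] _; elim: w a => [|b w IH] a; first exact: delta_W1.
exact: inW1_comp (delta_W1 a) (IH b).
Qed.

Lemma inW1_run_end w q :
  w <> [::] -> n - 2 <= val q -> val (run delta w q) = n - 1.
Proof. by move/inW1_run=> [_ w_end _]; apply: w_end. Qed.

Lemma W1_bifix_free : bifix_free (lang delta).
Proof.
move=> u v [q0 [q00 uf]] [q0' [q00' vf]] x xne.
have q0E : q0' = q0 by apply: val_inj; rewrite q00 q00'.
subst q0'.
have [x0 x_end _] := inW1_run xne.
split=> vE; move: vf; rewrite vE run_cat.
  by rewrite x_end ?uf //; lia.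
have une : u <> [::] by move=> u0; move: uf; rewrite u0 /= q00; lia.
have [_ u_end u_inj] := inW1_run une.
set r := run delta x q0.
have [r_lt|r_ge] := ltnP (val r) (n - 2); last by rewrite u_end //; lia.
move=> ur; have q0r : q0 <> r by move=> E; apply: (x0 q0); rewrite -/r -E.
have ur_q0 : run delta u q0 = run delta u r by apply: val_inj; rewrite uf ur.
have q0_lt : val q0 < n - 2 by rewrite q00; lia.
by move: (u_inj _ _ q0_lt r_lt q0r ur_q0); rewrite uf; lia.
Qed.

Lemma W1_bf_min_dfa :
  (forall p q0 : 'I_n, val q0 = 0 -> exists w, run delta w q0 = p) ->
  (forall p q : 'I_n, p <> q -> exists w : seq Sigma,
      (val (run delta w p) == n - 2) != (val (run delta w q) == n - 2)) ->
  bf_min_dfa delta.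
Proof.
move=> reach dist; split=> //; split=> //; split; last split.
- move=> q qe [|a w]; first by change (val q <> n - 2); lia.
  by rewrite inW1_run_end //; lia.
- by move=> q qf w wne; rewrite inW1_run_end //; lia.
- exact: W1_bifix_free.
Qed.

End W1Automaton.

Section AutomatonOfW.

Variable n : nat.
Hypothesis n_ge3 : 3 <= n.

Fact initial_lt : 0 < n. Proof. lia. Qed.
Fact final_lt : n - 2 < n. Proof. lia. Qed.
Fact empty_lt : n - 1 < n. Proof. lia. Qed.

Definition initial : 'I_n := Ordinal initial_lt.
Definition final : 'I_n := Ordinal final_lt.
Definition empty : 'I_n := Ordinal empty_lt.

Lemma val_initial : val initial = 0. Proof. by []. Qed.
Lemma val_final : val final = n - 2. Proof. by []. Qed.
Lemma val_empty : val empty = n - 1. Proof. by []. Qed.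

Definition two_point (a b c d : 'I_n) : trans n :=
  [ffun x => if x == a then b else if x == c then d else empty].

Lemma two_point_inW1 (a b c d : 'I_n) :
  val a < n - 2 -> val c < n - 2 -> val b <> 0 -> val d <> 0 ->
  (b = d -> a = c) -> inW1 (two_point a b c d).
Proof.
move=> a_lt c_lt b0 d0 bd; split=> [q|q q_ge|p q p_lt q_lt pq].
- by rewrite ffunE; case: ifP => // _; case: ifP => // _; rewrite val_empty; lia.
- rewrite ffunE; case: ifP => [/eqP qa|_]; first by move: q_ge; rewrite qa; lia.
  by case: ifP => [/eqP qc|//]; move: q_ge; rewrite qc; lia.
- rewrite !ffunE; case: (p =P a) => [pa|_]; case: (q =P a) => [qa|_];
    case: (p =P c) => [pc|_]; case: (q =P c) => [qc|_]; subst => //= E;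
    rewrite ?E ?val_empty //; case: pq.
  - exact: bd.
  - exact/esym/bd/esym.
Qed.

Definition letterW (t : trans n) : trans n :=
  match excluded_middle_informative (inW1 t) with
  | left _ => t
  | right _ => two_point initial empty initial empty
  end.

Lemma letterW_inW1 (t : trans n) : inW1 (letterW t).
Proof.
rewrite /letterW; case: excluded_middle_informative => // _.
by apply: two_point_inW1; rewrite ?val_initial ?val_empty //; lia.
Qed.

Lemma letterW_id (t : trans n) : inW1 t -> letterW t = t.
Proof. by rewrite /letterW; case: excluded_middle_informative. Qed.

Lemma letterW_word (t : trans n) : inW1 t -> run letterW [:: t] =1 t.
Proof. by move=> Wt q; rewrite /run /= letterW_id. Qed.

Lemma letterW_reach (p q0 : 'I_n) :
  val q0 = 0 -> exists w, run letterW w q0 = p.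
Proof.
move=> q00; have [p0|p0] := eqVneq (val p) 0.
  by exists [::]; apply: val_inj; rewrite p0.
have W : inW1 (two_point initial p initial p).
  by apply: two_point_inW1; rewrite ?val_initial ?eqxx //; try lia; apply/eqP.
exists [:: two_point initial p initial p].
by rewrite letterW_word // ffunE ifT //; apply/eqP/val_inj.
Qed.

Lemma letterW_distinguish (p q : 'I_n) : p <> q -> exists w : seq (trans n),
  (val (run letterW w p) == n - 2) != (val (run letterW w q) == n - 2).
Proof.
have sep (x y : 'I_n) : val x < n - 2 -> x <> y -> exists w : seq (trans n),
    (val (run letterW w x) == n - 2) != (val (run letterW w y) == n - 2).
  move=> x_lt xy; have W : inW1 (two_point x final x final).
    by apply: two_point_inW1; rewrite ?val_final ?eqxx //; lia.
  exists [:: two_point x final x final].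
  rewrite !letterW_word // !ffunE eqxx.
  have /negPf -> : y != x by exact/eqP/nesym.
  by rewrite val_final val_empty; lia.
move=> pq; have [p_lt|p_ge] := ltnP (val p) (n - 2); first exact: sep.
have [q_lt|q_ge] := ltnP (val q) (n - 2).
  by have [w] := sep q p q_lt (nesym pq); exists w; rewrite eq_sym.
exists [::]; change ((val p == n - 2) != (val q == n - 2)).
have pqv : val p <> val q by move/val_inj.
by move: (ord_ge_subn2 p_ge) (ord_ge_subn2 q_ge); lia.
Qed.

Lemma letterW_in_T (t : trans n) : in_T letterW t <-> inW t.
Proof.
rewrite inWE; split=> [[w [wne tw]]|Wt].
  exact: inW1_ext (inW1_run letterW_inW1 wne).
by exists [:: t]; split=> // q; rewrite letterW_word.
Qed.

Lemma letterW_all_colliding : all_colliding (in_T letterW).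
Proof.
move=> p q /andP [p_gt0 p_lt] /andP [q_gt0 q_lt] pq; left.
have qi : q != initial by apply/eqP => qi; move: q_gt0; rewrite qi.
have W : inW1 (two_point initial p q q).
  by apply: two_point_inW1 => [||||/pq //]; rewrite ?val_initial; lia.
exists (two_point initial p q q); split; first by apply/letterW_in_T/inWE.
exists q, initial; split; first exact/andP.
by rewrite !ffunE eqxx (negPf qi) eqxx.
Qed.

End AutomatonOfW.

Theorem mainTheorem9 (n : nat) (hn : 3 <= n) :
  (* W is the transition semigroup of such a DFA in which all pairs collide *)
  (exists (Sigma : finType) (delta : Sigma -> trans n),
      bf_min_dfa delta /\
      (forall t : trans n, in_T delta t <-> inW t) /\
      all_colliding (in_T delta)) /\
  (* and it contains every such transition semigroup (hence unique maximal) *)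
  (forall (Sigma : finType) (delta : Sigma -> trans n),
      bf_min_dfa delta -> all_colliding (in_T delta) ->
      forall t : trans n, in_T delta t -> inW t).
Proof.
split.
  exists (trans n), (letterW hn); split; last split.
  - apply: (W1_bf_min_dfa hn (letterW_inW1 hn)).
      exact: letterW_reach.
    exact: letterW_distinguish.
  - exact: letterW_in_T.
  - exact: letterW_all_colliding.
move=> Sigma delta D C t [w [wne tw]]; apply/inWE.
exact: inW1_ext (bf_inW1_run D C wne).
Qed.
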